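(* Let $k$ be a difference field of characteristic $0$ and $R=k\{y_1,\ldots,y_n\}$. Any strictly ascending chain $I_1\subsetneq I_2\subsetneq\cdots$ of well-mixed $\sigma$-ideals of $R$, each of which is generated by monomials (i.e. each $I_j$ is the well-mixed closure $\langle F_j\rangle$ of some set $F_j$ of monomials), is finite.
   Context: A difference field is a field $k$ with a ring endomorphism $\sigma$. $R=k\{y_1,\ldots,y_n\}$ is the polynomial ring over $k$ in the variables $\sigma^j(y_i)$ ($1\le i\le n$, $j\ge0$) with $\sigma$ extended naturally. For $p=\sum c_ix^i\in\mathbb{N}[x]$ and $a\in R$, $a^p=\prod_i(\sigma^i(a))^{c_i}$; for $\mathbf{u}\in\mathbb{N}[x]^n$ a monomial is $\mathbf{y}^{\mathbf{u}}=y_1^{u_1}\cdots y_n^{u_n}$. A $\sigma$-ideal is an ideal stable under $\sigma$; it is well-mixed if $ab\in I$ implies $a\sigma(b)\in I$. $\langle F\rangle$ is the smallest well-mixed $\sigma$-ideal containing $F$. *)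

From HB Require Import structures.
From mathcomp Require Import all_boot all_order all_algebra.
From mathcomp Require Import finmap.
From mathcomp Require Import monalg.

Set Implicit Arguments.
Unset Strict Implicit.
Unset Printing Implicit Defensive.

Import Order.TTheory GRing.Theory.
Local Open Scope ring_scope.

(* The variable sigma^j(y_i) is indexed by (i, j) : 'I_n * nat.               *)
Definition dvar (n : nat) := ('I_n * nat)%type.

(* Difference monomials y^u, u in N[x]^n: finitely supported exponent maps.   *)
Notation dmonom n := (cmonom (dvar n)).

Notation dpoly k n := {malg k[dmonom n]}.

(* sigma on monomials: the exponent of sigma^j(y_i) moves to sigma^(j+1)(y_i) *)
Definition shift_monom (n : nat) (m : dmonom n) : dmonom n :=
  ([cmonom m (x.1, x.2.-1) | x in [fset (y.1, y.2.+1) | y in finsupp m]%fset])%M.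

Definition sigmaR (k : fieldType) (sig : {rmorphism k -> k}) (n : nat)
  (p : dpoly k n) : dpoly k n :=
  mmap (fun c : k => (sig c)%:MP : dpoly k n)
       (fun m : dmonom n => (<< shift_monom m >> : dpoly k n)) p.

Definition is_monomial (k : fieldType) (n : nat) (p : dpoly k n) : Prop :=
  exists m : dmonom n, p = << m >>.

Definition is_ideal (k : fieldType) (n : nat) (I : dpoly k n -> Prop) : Prop :=
  [/\ I 0,
      (forall a b, I a -> I b -> I (a + b)) &
      (forall r a, I a -> I (r * a))].

Definition is_sigma_ideal (k : fieldType) (sig : {rmorphism k -> k}) (n : nat)
  (I : dpoly k n -> Prop) : Prop :=
  is_ideal I /\ (forall a, I a -> I (sigmaR sig a)).

Definition is_well_mixed (k : fieldType) (sig : {rmorphism k -> k}) (n : nat)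
  (I : dpoly k n -> Prop) : Prop :=
  is_sigma_ideal sig I /\ (forall a b, I (a * b) -> I (a * sigmaR sig b)).

Definition wm_closure (k : fieldType) (sig : {rmorphism k -> k}) (n : nat)
  (F : dpoly k n -> Prop) : dpoly k n -> Prop :=
  fun a => forall I : dpoly k n -> Prop,
    is_well_mixed sig I -> (forall f, F f -> I f) -> I a.

From HB Require Import structures.
From mathcomp Require Import all_boot all_order all_algebra.
From mathcomp Require Import finmap.
From mathcomp Require Import monalg.
From Stdlib Require Import Classical ClassicalEpsilon.

Set Implicit Arguments.
Unset Strict Implicit.
Unset Printing Implicit Defensive.

Import GRing.Theory.

(* For a monomial m put T_m(i, d) = sum_{e >= d} m(sigma^e y_i), the number of
   factors sigma^e(y_i) of m with e >= d.  A well-mixed sigma-ideal containing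
   m contains every m' with T_m <= T_m' pointwise: pair the factor sigma^d(y_i)
   of largest order in m with the factor sigma^e(y_i), e >= d, of largest order
   in m', and raise d to e using a * b in I => a * sigma(b) in I.  Each
   T_m(i, .) is a nonincreasing, eventually zero sequence, and such sequences
   (hence n-tuples of them) are well-quasi-ordered pointwise.  Along an
   infinite strictly ascending chain pick monomials m_j in I_(j+1) but not in
   I_j; some a < b has T_(m_a) <= T_(m_b), so m_b lies in I_(a+1), a subset of
   I_b. *)

Definition wqo_on (X : Type) (R : X -> X -> Prop) (A : X -> Prop) :=
  forall f : nat -> X, (forall i, A (f i)) -> exists i j, i < j /\ R (f i) (f j).

Lemma dependent_choice_nat (P : nat -> Prop) (Q : nat -> nat -> Prop) i0 :
  P i0 -> (forall i, P i -> exists j, [/\ i < j, P j & Q i j]) ->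
  exists g : nat -> nat, forall m, [/\ P (g m), g m < g m.+1 & Q (g m) (g m.+1)].
Proof.
move=> P0 next.
have [h Hh] : exists h : nat -> nat, forall i, P i -> [/\ i < h i, P (h i) & Q i (h i)].
  apply: (ClassicalEpsilon.choice (fun i j => P i -> [/\ i < j, P j & Q i j])) => i.
  have [/next [j Hj]|notP] := classic (P i); first by exists j.
  by exists 0 => /notP.
have Pg m : P (iter m h i0) by elim: m => //= m /Hh [].
by exists (fun m => iter m h i0) => m; have [] := Hh _ (Pg m).
Qed.

Lemma enum_infinitely_often (P : nat -> Prop) :
  (forall N, exists2 i, N <= i & P i) ->
  exists g : nat -> nat, forall m, P (g m) /\ g m < g m.+1.
Proof.
move=> inf; have [i0 _ P0] := inf 0.
have [|g Hg] := @dependent_choice_nat P (fun _ _ => True) i0 P0.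
  by move=> i _; have [j ij Pj] := inf i.+1; exists j.
by exists g => m; have [] := Hg m.
Qed.

Lemma infinite_pigeonhole (c : nat -> nat) L : (forall i, c i < L) ->
  exists2 v, v < L & forall N, exists2 i, N <= i & c i = v.
Proof.
elim: L c => [|L IH] c cL; first by have := cL 0.
have [infL|] := classic (forall N, exists2 i, N <= i & c i = L); first by exists L.
move=> /not_all_ex_not [N notL].
have [|v vL infv] := IH (fun i => c (N + i)).
  move=> i; have := cL (N + i); rewrite ltnS leq_eqVlt => /orP[/eqP ciL|//].
  by case: notL; exists (N + i); rewrite ?leq_addr.
exists v; first exact: ltnW.
move=> M; have [i Mi civ] := infv M; exists (N + i) => //.
exact: leq_trans Mi (leq_addl _ _).
Qed.

Section WqoTheory.
Variables (X : Type) (R : X -> X -> Prop).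
Hypothesis R_trans : forall y x z, R x y -> R y z -> R x z.

Lemma wqo_ascending_subseq (A : X -> Prop) (f : nat -> X) :
  wqo_on R A -> (forall i, A (f i)) ->
  exists g : nat -> nat, forall m, g m < g m.+1 /\ R (f (g m)) (f (g m.+1)).
Proof.
move=> wqoA Af.
have [N succN] : exists N, forall i, N <= i -> exists2 j, i < j & R (f i) (f j).
  apply: NNPP => noN.
  have [|g Hg] := @enum_infinitely_often (fun i => forall j, i < j -> ~ R (f i) (f j)).
    move=> N; apply: NNPP => noi; apply: noN; exists N => i Ni.
    apply: NNPP => noj; apply: noi; exists i => // j ij Rij; apply: noj; by exists j.
  have g_lt : {homo g : a b / a < b} by apply: (homo_ltn (@ltn_trans)) => m; case: (Hg m).
  have [a [b [ab Rab]]] := wqoA (f \o g) (fun m => Af _).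
  by have [terminal _] := Hg a; apply: (terminal (g b)) => //; apply: g_lt.
have [|g Hg] := @dependent_choice_nat (fun i => N <= i) (fun i j => R (f i) (f j)) N (leqnn N).
  move=> i Ni; have [j ij Rij] := succN i Ni; exists j; split=> //.
  exact: leq_trans Ni (ltnW ij).
by exists g => m; have [] := Hg m.
Qed.

Lemma wqo_prod (Y : Type) (S : Y -> Y -> Prop) (A : X -> Prop) (B : Y -> Prop) :
  wqo_on R A -> wqo_on S B ->
  wqo_on (fun p q : X * Y => R p.1 q.1 /\ S p.2 q.2) (fun p => A p.1 /\ B p.2).
Proof.
move=> wqoA wqoB f ABf.
have [g Hg] := wqo_ascending_subseq (f := fun i => (f i).1) wqoA (fun i => (ABf i).1).
have [a [b [ab Sab]]] := wqoB (fun m => (f (g m)).2) (fun m => (ABf _).2).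
exists (g a), (g b); split; last split=> //.
  by apply: (homo_ltn (@ltn_trans)) ab => m; case: (Hg m).
by apply: (@homo_ltn _ (fun m => (f (g m)).1) R R_trans) ab => m; case: (Hg m).
Qed.

End WqoTheory.

Lemma wqo_transfer (X Y : Type) (R : X -> X -> Prop) (A : X -> Prop)
    (S : Y -> Y -> Prop) (B : Y -> Prop) (code : X -> Y -> Prop) :
  (forall x, A x -> exists2 y, B y & code x y) ->
  (forall x x' y y', A x -> A x' -> code x y -> code x' y' -> S y y' -> R x x') ->
  wqo_on S B -> wqo_on R A.
Proof.
move=> code_ex code_refl wqoB f Af.
have [c Hc] : exists c : nat -> Y, forall i, B (c i) /\ code (f i) (c i).
  apply: (ClassicalEpsilon.choice (fun i y => B y /\ code (f i) y)) => i.
  by have [y] := code_ex _ (Af i); exists y.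
have [a [b [ab Sab]]] := wqoB c (fun i => (Hc i).1).
have [[_ code_a] [_ code_b]] := (Hc a, Hc b).
by exists a, b; split=> //; apply: code_refl (Af a) (Af b) code_a code_b Sab.
Qed.

Lemma wqo_leq : wqo_on (fun a b : nat => a <= b) (fun _ => True).
Proof.
move=> f _; apply: NNPP => bad.
have desc i : f i.+1 < f i.
  by rewrite ltnNge; apply/negP => le_f; apply: bad; exists i, i.+1.
have below i : f i + i <= f 0.
  by elim: i => [|i IH]; rewrite ?addn0 // addnS; apply: leq_trans IH; rewrite ltn_add2r.
by have := below (f 0).+1; rewrite addnS ltnNge leq_addl.
Qed.

Definition pointwise (X : Type) (m : nat) (R : X -> X -> Prop) (u v : nat -> X) :=
  forall i, i < m -> R (u i) (v i).

Lemma wqo_pointwise (X : Type) (R : X -> X -> Prop) (A : X -> Prop) m :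
  (forall y x z, R x y -> R y z -> R x z) -> wqo_on R A ->
  wqo_on (pointwise m R) (fun u => forall i, i < m -> A (u i)).
Proof.
move=> R_trans wqoA; elim: m => [|m IH]; first by move=> f _; exists 0, 1.
have trans_m : forall v u w, pointwise m R u v -> pointwise m R v w -> pointwise m R u w.
  by move=> v u w Ruv Rvw i im; apply: R_trans (Ruv _ im) (Rvw _ im).
apply: (wqo_transfer (code := fun u p => p = (u, u m)) _ _ (wqo_prod trans_m IH wqoA)).
  move=> u Au; exists (u, u m) => //; split=> [i im|]; apply: Au => //.
  exact: ltnW.
move=> u u' _ _ _ _ -> -> [Rm Rlast] i; rewrite ltnS leq_eqVlt => /orP[/eqP-> //|].
exact: Rm.
Qed.

Lemma wqo_of_bad_cones (X : Type) (R : X -> X -> Prop) (A : X -> Prop) :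
  (forall x, A x -> exists L (B : nat -> X -> Prop),
     (forall v, v < L -> wqo_on R (B v)) /\
     (forall y, A y -> ~ R x y -> exists2 v, v < L & B v y)) ->
  wqo_on R A.
Proof.
move=> cones f Af.
have [[j [j_pos Rj]]|no_succ] := classic (exists j, 0 < j /\ R (f 0) (f j)).
  by exists 0, j.
have [L [B [wqoB cover]]] := cones _ (Af 0).
have [c Hc] : exists c : nat -> nat, forall i, c i < L /\ B (c i) (f i.+1).
  apply: (ClassicalEpsilon.choice (fun i v => v < L /\ B v (f i.+1))) => i.
  have [R0|v vL Bv] := cover (f i.+1) (Af _); last by exists v.
  by apply: no_succ; exists i.+1.
have [v vL infv] := infinite_pigeonhole (fun i => (Hc i).1).
have [g Hg] := enum_infinitely_often infv.
have Bg m : B v (f (g m).+1) by have [<- _] := Hg m; exact: (Hc _).2.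
have [a [b [ab Rab]]] := wqoB v vL (fun m => f (g m).+1) Bg.
exists (g a).+1, (g b).+1; split=> //; rewrite ltnS.
by apply: (homo_ltn (@ltn_trans)) ab => m; case: (Hg m).
Qed.

Definition is_partition (q : nat -> nat) :=
  (forall d, q d.+1 <= q d) /\ exists L, forall d, L <= d -> q d = 0.

Definition lefun (q q' : nat -> nat) := forall d, q d <= q' d.

Lemma lefun_trans : forall q' q q'', lefun q q' -> lefun q' q'' -> lefun q q''.
Proof. by move=> q' q q'' le1 le2 d; apply: leq_trans (le1 d) (le2 d). Qed.

Lemma nonincreasing_antimono q : (forall d, q d.+1 <= q d) ->
  {homo q : d d' / d <= d' >-> d' <= d}.
Proof. by apply: homo_leq => // ? ? ? le1 le2; apply: leq_trans le2 le1. Qed.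

Lemma wqo_partition_bounded k C : wqo_on lefun (fun q => is_partition q /\ q k < C).
Proof.
(* q is encoded by its first k values followed, for t < C, by the least j
   with q j <= t. *)
pose code (q y : nat -> nat) := (forall i, i < k -> y i = q i) /\
  forall t j, t < C -> (q j <= t) = (y (k + t) <= j).
apply: (wqo_transfer (code := code) _ _ (wqo_pointwise (m := k + C) leq_trans wqo_leq)).
  move=> q [[q_mono [L qL]] _].
  have q_small t : exists j, q j <= t by exists L; rewrite qL.
  exists (fun i => if i < k then q i else ex_minn (q_small (i - k))) => //.
  split=> [i -> //|t j _]; rewrite ltnNge leq_addr /= addKn.
  case: ex_minnP => j0 qj0 min0; apply/idP/idP => [/min0 //|j0j].
  exact: leq_trans (nonincreasing_antimono q_mono j0j) qj0.
move=> q q' y y' [[q_mono _] qkC] _ [y_low y_jump] [y'_low y'_jump] yy' d.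
have [dk|kd] := ltnP d k.
  by rewrite -y_low // -y'_low //; apply: yy'; apply: leq_trans dk (leq_addr _ _).
rewrite leqNgt; apply/negP => q'd_lt.
have tC : q' d < C.
  exact: leq_trans q'd_lt (leq_trans (nonincreasing_antimono q_mono kd) (ltnW qkC)).
have := leqnn (q' d); rewrite y'_jump // => /(leq_trans (yy' _ _)).
by rewrite ltn_add2l => /(_ tC); rewrite -y_jump // leqNgt q'd_lt.
Qed.

Lemma wqo_partition : wqo_on lefun is_partition.
Proof.
apply: wqo_of_bad_cones => q [q_mono [L qL]].
exists L, (fun d q' => is_partition q' /\ q' d < q d); split=> [d _|q' q'_part not_le].
  exact: wqo_partition_bounded.
apply: NNPP => no_d; apply: not_le => d; rewrite leqNgt; apply/negP => lt_d.
have dL : d < L by rewrite ltnNge; apply/negP => /qL q0; rewrite q0 in lt_d.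
by apply: no_d; exists d.
Qed.

Section TailDegree.
Variable n : nat.
Implicit Types m : dmonom n.

Definition tail_deg m (i d : nat) : nat :=
  \sum_(x <- finsupp m) (if (x.1 == i :> nat) && (d <= x.2) then m x else 0).

Lemma tail_deg_widen m (s : {fset dvar n}) i d : (finsupp m `<=` s)%fset ->
  tail_deg m i d = \sum_(x <- s) (if (x.1 == i :> nat) && (d <= x.2) then m x else 0).
Proof.
move=> supp_s; rewrite /tail_deg (big_fset_incl _ supp_s) // => x _.
by rewrite -cmE_eq0 => /eqP ->; case: ifP.
Qed.

Lemma tail_degM m1 m2 i d :
  tail_deg (mmul m1 m2) i d = tail_deg m1 i d + tail_deg m2 i d.
Proof.
rewrite {1}/tail_deg mdomD (tail_deg_widen (m := m1) _ _ (fsubsetUl _ (finsupp m2))).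
rewrite (tail_deg_widen (m := m2) _ _ (fsubsetUr (finsupp m1) _)) -big_split /=.
by apply: eq_bigr => x _; rewrite cmM; case: ifP.
Qed.

Lemma tail_degU (x : dvar n) i d :
  tail_deg (ucm x) i d = ((x.1 == i :> nat) && (d <= x.2)).
Proof. by rewrite /tail_deg mdomU big_seq_fset1 cmUU; case: ifP. Qed.

Lemma tail_degS m (i : 'I_n) d : tail_deg m i d = m (i, d) + tail_deg m i d.+1.
Proof.
have supp_le : (finsupp m `<=` (i, d) |` finsupp m)%fset by apply: fsubsetU1.
have id_in : (i, d) \in ((i, d) |` finsupp m)%fset by rewrite fset1U1.
rewrite !(tail_deg_widen _ _ supp_le) !(big_fsetD1 _ id_in) /= eqxx leqnn ltnn andbF.
rewrite add0n; congr (_ + _); apply: eq_big_seq => -[j e]; rewrite !inE /= => /andP[ne _].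
case: eqP => [ji|] //=; rewrite leq_eqVlt; case: eqP => // ed.
by case/eqP: ne; rewrite ed; congr (_, _); apply: val_inj.
Qed.

Lemma tail_deg_partition m i : is_partition (tail_deg m i).
Proof.
split=> [d|].
  by apply: leq_sum => x _; case: ifP => // /andP[-> /ltnW ->].
exists (\max_(x <- finsupp m) x.2.+1) => d max_le_d.
rewrite /tail_deg big1_seq // => x /andP[_ x_in]; case: ifP => // /andP[_ dx].
have := @leq_bigmax_seq _ _ xpredT (fun x : dvar n => x.2.+1) _ x_in isT.
by move=> /leq_trans /(_ (leq_trans max_le_d dx)); rewrite ltnn.
Qed.

Lemma tail_deg_top m (i : 'I_n) d0 : 0 < tail_deg m i d0 ->
  exists2 d, d0 <= d & 0 < m (i, d) /\ tail_deg m i d.+1 = 0.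
Proof.
move=> pos_d0; have [L L0] := (tail_deg_partition m i).2.
have bounded d : 0 < tail_deg m i d -> d <= L.
  by move=> pos_d; rewrite leqNgt; apply: contraTN pos_d => /ltnW /L0 ->.
have [d pos_d max_d] := ex_maxnP (ex_intro _ d0 pos_d0) bounded.
have top : tail_deg m i d.+1 = 0.
  by apply/eqP; rewrite -leqn0 leqNgt; apply/negP => /max_d; rewrite ltnn.
by exists d; [exact: max_d | move: pos_d; rewrite tail_degS top addn0].
Qed.

Lemma tail_deg_le_cofactor (m0 m0' : dmonom n) (i : 'I_n) d e : d <= e ->
  tail_deg (mmul (ucm (i, d)) m0) i d.+1 = 0 ->
  (forall (j : 'I_n) t, tail_deg (mmul (ucm (i, d)) m0) j t
                        <= tail_deg (mmul (ucm (i, e)) m0') j t) ->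
  forall (j : 'I_n) t, tail_deg m0 j t <= tail_deg m0' j t.
Proof.
move=> de top le j t; have := le j t; rewrite !tail_degM !tail_degU /=.
have [<-|_] := eqVneq (i : nat) j; last by rewrite !add0n.
have [td|dt] := leqP t d; first by rewrite (leq_trans td de) leq_add2l.
have top0 : tail_deg m0 i t = 0.
  apply/eqP; rewrite -leqn0 -top tail_degM.
  exact: leq_trans (nonincreasing_antimono (tail_deg_partition _ _).1 dt) (leq_addl _ _).
by rewrite top0.
Qed.

End TailDegree.

Local Open Scope ring_scope.

Section MonomialsInWellMixedIdeals.
Variables (k : fieldType) (sig : {rmorphism k -> k}) (n : nat).
Implicit Types m : dmonom n.

Lemma monomialM m1 m2 : (<< mmul m1 m2 >> : dpoly k n) = << m1 >> * << m2 >>.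
Proof. by rewrite malgM_def fgmulUU mulr1. Qed.

Lemma shift_monomU (x : dvar n) : shift_monom (ucm x) = ucm (x.1, x.2.+1).
Proof.
apply/eqP/cmP => z; rewrite /shift_monom cmE fsfun_fun cmU.
case: (boolP (z \in _)) => [/imfsetP [y /=]|z_out].
  by rewrite mdomU inE => /eqP -> ->; rewrite cmUU; case: x => a b /=; rewrite eqxx.
rewrite cmU; case: eqP => // xz; case/negP: z_out; apply/imfsetP; exists x => //.
by rewrite /= mdomU inE.
Qed.

Lemma sigmaR_monomial m : sigmaR sig (<< m >> : dpoly k n) = << shift_monom m >>.
Proof. by rewrite /sigmaR mmapE msuppU1 big_seq_fset1 mcoeffUU rmorph1 mpolyC1E mul1r. Qed.

Lemma monom_factorU m (x : dvar n) : (0 < m x)%N -> m = mmul (ucm x) (divcm m (ucm x)).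
Proof.
move=> m_x; apply/eqP/cmP => z; rewrite mulcmE divcmE cmU.
by case: (eqVneq x z) => [<-|_]; rewrite ?subn0 ?subnKC.
Qed.

Variable I : dpoly k n -> Prop.
Hypothesis wmI : is_well_mixed sig I.

Lemma wm_monomial_mulr m c : I << m >> -> I << mmul m c >>.
Proof. by case: wmI => [[[_ _ I_mul] _] _] Im; rewrite monomialM mulrC; apply: I_mul. Qed.

Lemma wm_monomial_shift m (i : 'I_n) d t :
  I << mmul m (ucm (i, d)) >> -> I << mmul m (ucm (i, d + t)%N) >>.
Proof.
elim: t => [|t IH]; first by rewrite addn0.
move=> /IH; rewrite !monomialM addnS => /wmI.2.
by rewrite sigmaR_monomial shift_monomU.
Qed.

Lemma wm_monomial_tail_le_mul m m' (a : dmonom n) :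
  (forall (j : 'I_n) t, tail_deg m j t <= tail_deg m' j t)%N ->
  I << mmul a m >> -> I << mmul a m' >>.
Proof.
have [N] := ubnP (mdeg m); elim: N m m' a => [|N IH] m m' a deg_m le.
  by exfalso; rewrite ltn0 in deg_m.
have [m1|m_nonunit] := eqVneq m mone; first by rewrite m1 mulm1; apply: wm_monomial_mulr.
have [x x_in] : exists x : dvar n, x \in finsupp m.
  apply/fset0Pn; apply: contra_neq m_nonunit => supp0.
  by apply: mdeg_eq0I; rewrite mdegE supp0 big_seq_fset0.
have pos_x : (0 < tail_deg m x.1 x.2)%N.
  by rewrite tail_degS -surjective_pairing ltn_addr // lt0n cmE_neq0.
have [d _ [m_id top]] := tail_deg_top pos_x.
set i := x.1 in m_id top.
have pos_id' : (0 < tail_deg m' i d)%N.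
  by apply: leq_trans (le i d); rewrite tail_degS ltn_addr.
have [e de [m'_ie _]] := tail_deg_top pos_id'.
have Em := monom_factorU m_id; have Em' := monom_factorU m'_ie.
set m0 := divcm m _ in Em; set m0' := divcm m' _ in Em'.
have deg_m0 : (mdeg m0 < N)%N by move: deg_m; rewrite Em mdegM mdegU add1n ltnS.
have le0 : forall (j : 'I_n) t, (tail_deg m0 j t <= tail_deg m0' j t)%N.
  by apply: (tail_deg_le_cofactor (i := i) de) => [|j t]; rewrite -Em // -Em'.
rewrite Em mulmA => /(IH _ m0' _ deg_m0 le0).
rewrite -mulmA [mmul _ m0']mulmC mulmA => /(wm_monomial_shift (e - d)).
by rewrite (subnKC de) -mulmA [mmul m0' _]mulmC -Em'.
Qed.

Lemma wm_monomial_tail_le m m' :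
  (forall (j : 'I_n) t, tail_deg m j t <= tail_deg m' j t)%N ->
  I << m >> -> I << m' >>.
Proof. by move=> le; rewrite -(mul1m m) -(mul1m m'); apply: wm_monomial_tail_le_mul. Qed.

End MonomialsInWellMixedIdeals.

Lemma wm_closure_monomial_witness (k : fieldType) (sig : {rmorphism k -> k}) (n : nat)
    (J F : dpoly k n -> Prop) :
  is_well_mixed sig J -> (forall f, F f -> is_monomial f) ->
  ~ (forall a, wm_closure sig F a -> J a) ->
  exists m : dmonom n, wm_closure sig F << m >> /\ ~ J << m >>.
Proof.
move=> wmJ F_monomial not_sub; apply: NNPP => no_m; apply: not_sub => a /(_ J wmJ); apply.
move=> f Ff; apply: NNPP => notJf; apply: no_m; have [m f_m] := F_monomial f Ff.
by exists m; rewrite -f_m; split=> // K _; apply.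
Qed.

Theorem corollary4p11 (k : fieldType) (sig : {rmorphism k -> k}) (n : nat)
  (hchar : [pchar k] =i pred0)
  (I : nat -> dpoly k n -> Prop)
  (hwm : forall j, is_well_mixed sig (I j))
  (hgen : forall j, exists F : dpoly k n -> Prop,
            (forall f, F f -> is_monomial f) /\
            (forall a, I j a <-> wm_closure sig F a)) :
  ~ (forall j, (forall a, I j a -> I j.+1 a) /\ ~ (forall a, I j.+1 a -> I j a)).
Proof.
move=> chain.
have chain_mono : {homo I : i j / (i <= j)%N >-> forall a, i a -> j a}.
  by apply: homo_leq => [P a //|Q P R PQ QR a /PQ /QR|j]; [|exact: (chain j).1].
have [mm Hmm] : exists mm : nat -> dmonom n, forall j, I j.+1 << mm j >> /\ ~ I j << mm j >>.
  apply: (ClassicalEpsilon.choice (fun j m => I j.+1 << m >> /\ ~ I j << m >>)) => j.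
  have [F [F_monomial I_F]] := hgen j.+1.
  have [|m [Fm notIm]] := wm_closure_monomial_witness (hwm j) F_monomial.
    by move=> sub; apply: (chain j).2 => a /I_F /sub.
  by exists m; split=> //; apply/I_F.
have [a [b [ab le_ab]]] := wqo_pointwise (m := n) lefun_trans wqo_partition
  (fun j i _ => tail_deg_partition (mm j) i).
have : I a.+1 << mm b >>.
  apply: (wm_monomial_tail_le (hwm a.+1) _ (Hmm a).1) => i t.
  exact: le_ab (ltn_ord i) t.
by move=> /(chain_mono _ _ ab) Ib; apply: (Hmm b).2.
Qed.
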